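(* There is no functor $\sigma\colon\mathrm{ED}\to\mathrm{EEED}$ (additive or otherwise) such that the composite $\pi\sigma\colon\mathrm{ED}\to\mathrm{ED}$ is naturally isomorphic to the identity functor.
   Context: For an abelian group $U$, $U[2]=\{u:2u=0\}$ and $U/2=U/2U$. An extended $\eta$-diagram is a diagram of abelian groups $B\xrightarrow{\psi}A\xrightarrow{\eta}C\xrightarrow{\chi}B$ with $2\eta=0$, $\psi\chi=0$ and $\chi\eta\psi=2\cdot1_B$. A morphism to $B'\xrightarrow{\psi'}A'\xrightarrow{\eta'}C'\xrightarrow{\chi'}B'$ is a triple $(f,g,h)$, $f\colon A\to A'$, $g\colon B\to B'$, $h\colon C\to C'$, with $f\psi=\psi'g$, $h\eta=\eta'f$, $g\chi=\chi'h$. The diagram is exact if the induced sequence $C/2\xrightarrow{\chi}B\xrightarrow{\psi}A[2]$ is short exact; $\mathrm{EEED}$ is the category of exact extended $\eta$-diagrams. $\mathrm{ED}$ is the category of homomorphisms $\eta\colon A\to C$ of abelian groups with $2\eta=0$, morphisms being commutative squares $(f,h)$. $\pi\colon\mathrm{EEED}\to\mathrm{ED}$ forgets $B,\chi,\psi$ and sends $(f,g,h)$ to $(f,h)$. *)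

(* Morphisms of the categories
   are compared extensionally (pointwise equality of the component maps). *)
From HB Require Import structures.
From mathcomp Require Import all_boot all_algebra.
Set Implicit Arguments. Unset Strict Implicit. Unset Printing Implicit Defensive.
Import GRing.Theory.
Local Open Scope ring_scope.

Record ED_obj := ED_Obj {
  ED_A : zmodType;
  ED_C : zmodType;
  ED_eta : ED_A -> ED_C;
  ED_eta_hom : GRing.zmod_morphism ED_eta;
  ED_eta2 : forall a, ED_eta a *+ 2 = 0 }.

Record ED_hom (X Y : ED_obj) := ED_Hom {
  EDh_f : ED_A X -> ED_A Y;
  EDh_h : ED_C X -> ED_C Y;
  EDh_f_hom : GRing.zmod_morphism EDh_f;
  EDh_h_hom : GRing.zmod_morphism EDh_h;
  EDh_comm : forall a, EDh_h (@ED_eta X a) = @ED_eta Y (EDh_f a) }.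

Definition ED_hom_eq (X Y : ED_obj) (m n : ED_hom X Y) : Prop :=
  (forall a, EDh_f m a = EDh_f n a) /\ (forall c, EDh_h m c = EDh_h n c).

Definition ED_id (X : ED_obj) : ED_hom X X.
Proof.
refine (@ED_Hom X X id id _ _ _) => //.
Defined.

Definition ED_comp (X Y Z : ED_obj) (n : ED_hom Y Z) (m : ED_hom X Y) :
  ED_hom X Z.
Proof.
refine (@ED_Hom X Z (EDh_f n \o EDh_f m) (EDh_h n \o EDh_h m) _ _ _).
- by move=> x y /=; rewrite (EDh_f_hom m) (EDh_f_hom n).
- by move=> x y /=; rewrite (EDh_h_hom m) (EDh_h_hom n).
- by move=> a /=; rewrite EDh_comm EDh_comm.
Defined.

(* Exactness of C/2 -chi-> B -psi-> A[2] is written out: chi induces   *)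
(* an injection C/2C -> B (ker chi is contained in 2C), ker psi = im   *)
(* chi, and psi maps onto A[2].  (That chi kills 2C and psi lands in   *)
(* A[2] follows from the diagram axioms.)                              *)
Record EEED_obj := EEED_Obj {
  EE_A : zmodType;
  EE_B : zmodType;
  EE_C : zmodType;
  EE_psi : EE_B -> EE_A;
  EE_eta : EE_A -> EE_C;
  EE_chi : EE_C -> EE_B;
  EE_psi_hom : GRing.zmod_morphism EE_psi;
  EE_eta_hom : GRing.zmod_morphism EE_eta;
  EE_chi_hom : GRing.zmod_morphism EE_chi;
  EE_eta2 : forall a, EE_eta a *+ 2 = 0;
  EE_psichi : forall c, EE_psi (EE_chi c) = 0;
  EE_chietapsi : forall b, EE_chi (EE_eta (EE_psi b)) = b *+ 2;
  EE_exact_C2 : forall c, EE_chi c = 0 -> exists c', c = c' *+ 2;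
  EE_exact_B : forall b, EE_psi b = 0 -> exists c, EE_chi c = b;
  EE_exact_A2 : forall a, a *+ 2 = 0 -> exists b, EE_psi b = a }.

Record EEED_hom (X Y : EEED_obj) := EEED_Hom {
  EEh_f : EE_A X -> EE_A Y;
  EEh_g : EE_B X -> EE_B Y;
  EEh_h : EE_C X -> EE_C Y;
  EEh_f_hom : GRing.zmod_morphism EEh_f;
  EEh_g_hom : GRing.zmod_morphism EEh_g;
  EEh_h_hom : GRing.zmod_morphism EEh_h;
  EEh_psi : forall b, EEh_f (@EE_psi X b) = @EE_psi Y (EEh_g b);
  EEh_eta : forall a, EEh_h (@EE_eta X a) = @EE_eta Y (EEh_f a);
  EEh_chi : forall c, EEh_g (@EE_chi X c) = @EE_chi Y (EEh_h c) }.

Definition EEED_hom_eq (X Y : EEED_obj) (m n : EEED_hom X Y) : Prop :=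
  [/\ forall a, EEh_f m a = EEh_f n a,
      forall b, EEh_g m b = EEh_g n b &
      forall c, EEh_h m c = EEh_h n c].

Definition EEED_id (X : EEED_obj) : EEED_hom X X.
Proof.
by refine (@EEED_Hom X X id id id _ _ _ _ _ _).
Defined.

Definition EEED_comp (X Y Z : EEED_obj) (n : EEED_hom Y Z)
  (m : EEED_hom X Y) : EEED_hom X Z.
Proof.
refine (@EEED_Hom X Z (EEh_f n \o EEh_f m) (EEh_g n \o EEh_g m)
          (EEh_h n \o EEh_h m) _ _ _ _ _ _).
- by move=> x y /=; rewrite (EEh_f_hom m) (EEh_f_hom n).
- by move=> x y /=; rewrite (EEh_g_hom m) (EEh_g_hom n).
- by move=> x y /=; rewrite (EEh_h_hom m) (EEh_h_hom n).
- by move=> b /=; rewrite EEh_psi EEh_psi.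
- by move=> a /=; rewrite EEh_eta EEh_eta.
- by move=> c /=; rewrite EEh_chi EEh_chi.
Defined.

Definition pi_obj (X : EEED_obj) : ED_obj :=
  @ED_Obj (EE_A X) (EE_C X) (@EE_eta X) (@EE_eta_hom X) (@EE_eta2 X).

Definition pi_hom (X Y : EEED_obj) (m : EEED_hom X Y) :
  ED_hom (pi_obj X) (pi_obj Y) :=
  @ED_Hom (pi_obj X) (pi_obj Y) (EEh_f m) (EEh_h m)
    (EEh_f_hom m) (EEh_h_hom m) (EEh_eta m).

Record functor_ED_EEED := Functor_ED_EEED {
  F_obj : ED_obj -> EEED_obj;
  F_hom : forall X Y : ED_obj, ED_hom X Y -> EEED_hom (F_obj X) (F_obj Y);
  F_hom_ext : forall (X Y : ED_obj) (m n : ED_hom X Y),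
      ED_hom_eq m n -> EEED_hom_eq (F_hom m) (F_hom n);
  F_id : forall X : ED_obj, EEED_hom_eq (F_hom (ED_id X)) (EEED_id (F_obj X));
  F_comp : forall (X Y Z : ED_obj) (m : ED_hom X Y) (n : ED_hom Y Z),
      EEED_hom_eq (F_hom (ED_comp n m)) (EEED_comp (F_hom n) (F_hom m)) }.

Definition nat_iso_pi_sigma_id (s : functor_ED_EEED) : Type :=
  { alpha : forall X : ED_obj, ED_hom (pi_obj (F_obj s X)) X &
  { beta  : forall X : ED_obj, ED_hom X (pi_obj (F_obj s X)) &
    [/\ forall X, ED_hom_eq (ED_comp (alpha X) (beta X)) (ED_id X),
        forall X, ED_hom_eq (ED_comp (beta X) (alpha X))
                            (ED_id (pi_obj (F_obj s X))) &
        forall (X Y : ED_obj) (m : ED_hom X Y),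
          ED_hom_eq (ED_comp (alpha Y) (pi_hom (F_hom s m)))
                    (ED_comp m (alpha X))] } }.

(* Let alpha : pi sigma => Id be the natural isomorphism, Z2 the object
   id : Z/2 -> Z/2 and V2 the object id : V -> V with V = (Z/2)^2.  Fix b0 in
   B(sigma Z2) with alpha(psi b0) = 1; every i : Z2 -> X then yields the element
   x_i := sigma(i)(b0) of B(sigma X), with alpha(psi x_i) = i(1).  An
   endomorphism of Z2 is 0 or 1, and sigma sends it to 0 or 1 on B, so
   sigma(q)(x_i) = (q i)(1) b0 for q : X -> Z2.  Since ker psi = im chi and
   chi is injective modulo 2, two projections V2 -> Z2 with independent
   kernels detect elements of ker psi; this gives x_diag = x_inl + x_inr and
   x_inl = x_diag + x_inr, whence 2 x_inr = 0.  Then chi (eta (psi x_inr)) = 0,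
   so eta (psi x_inr) is divisible by 2; applying alpha, so would be
   (0, 1) in V, which is absurd. *)
From mathcomp Require Import all_boot all_algebra.
Set Implicit Arguments. Unset Strict Implicit. Unset Printing Implicit Defensive.
Import GRing.Theory.
Local Open Scope ring_scope.

Section ZmodMorphism.
Variables (U W : zmodType) (f : U -> W) (fM : GRing.zmod_morphism f).

Lemma zmod_morph0 : f 0 = 0.
Proof. by have := fM 0 0; rewrite !subrr. Qed.

Lemma zmod_morphN x : f (- x) = - f x.
Proof. by have := fM 0 x; rewrite !sub0r zmod_morph0 sub0r. Qed.

Lemma zmod_morphD x y : f (x + y) = f x + f y.
Proof. by have := fM x (- y); rewrite opprK zmod_morphN opprK. Qed.

Lemma zmod_morphMn x n : f (x *+ n) = f x *+ n.
Proof.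
by elim: n => [|n IHn]; rewrite ?zmod_morph0 // !mulrS zmod_morphD IHn.
Qed.

End ZmodMorphism.
Arguments zmod_morph0 {U W f}.
Arguments zmod_morphMn {U W f}.

Lemma Zp2_cases (P : 'Z_2 -> Prop) : P 0 -> P 1 -> forall x, P x.
Proof.
move=> P0 P1 [[|[|i]] lti]; last by [].
- by have -> : Ordinal lti = 0 by apply/val_inj.
- by have -> : Ordinal lti = 1 by apply/val_inj.
Qed.

Lemma Zp2_mulrn2 (x : 'Z_2) : x *+ 2 = 0.
Proof. by rewrite -mulr_natr pchar_Zp // mulr0. Qed.

(* [x] is read as the natural number 0 or 1 on the right. *)
Lemma zmod_morph_Zp2 (W : zmodType) (f : 'Z_2 -> W) :
  GRing.zmod_morphism f -> forall x, f x = f 1 *+ x.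
Proof. by move=> fM; apply: Zp2_cases; rewrite ?zmod_morph0. Qed.

Section EEEDObj.
Variable E : EEED_obj.

Lemma EE_chi0 : @EE_chi E 0 = 0.
Proof. exact: zmod_morph0 (@EE_chi_hom E). Qed.

Lemma EE_eta_psi_mulrn2 (b : EE_B E) :
  b *+ 2 = 0 -> exists c, EE_eta (EE_psi b) = c *+ 2.
Proof. by move=> b2; apply: EE_exact_C2; rewrite EE_chietapsi. Qed.

End EEEDObj.

Lemma EEED_idem_hom_g0 (E : EEED_obj) (m : EEED_hom E E) :
  (forall b, EEh_g m (EEh_g m b) = EEh_g m b) ->
  (forall a, EEh_f m a = 0) -> (forall c, EEh_h m c = 0) ->
  forall b, EEh_g m b = 0.
Proof.
move=> mm f0 h0 b.
have /EE_exact_B[c gbE] : EE_psi (EEh_g m b) = 0 by rewrite -EEh_psi f0.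
by rewrite -mm -gbE EEh_chi h0 EE_chi0.
Qed.

Section FunctorB.
Variable s : functor_ED_EEED.
Local Notation sigmaB m := (EEh_g (F_hom s m)).

Lemma F_g_comp (X Y Z : ED_obj) (m : ED_hom X Y) (n : ED_hom Y Z) b :
  sigmaB (ED_comp n m) b = sigmaB n (sigmaB m b).
Proof. by case: (F_comp s m n) => _ ->. Qed.

Lemma F_g_ext (X Y : ED_obj) (m n : ED_hom X Y) :
  ED_hom_eq m n -> forall b, sigmaB m b = sigmaB n b.
Proof. by move=> /(F_hom_ext s)[]. Qed.

Lemma F_g_id (X : ED_obj) b : sigmaB (ED_id X) b = b.
Proof. by case: (F_id s X) => _ ->. Qed.

End FunctorB.

Definition ED_exp2 (U : zmodType) (U2 : forall u : U, u *+ 2 = 0) : ED_obj :=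
  @ED_Obj U U id (fun _ _ => erefl) U2.

Definition ED_exp2_hom (U W : zmodType) {U2 : forall u : U, u *+ 2 = 0}
    {W2 : forall w : W, w *+ 2 = 0} (f : U -> W) (fM : GRing.zmod_morphism f) :
  ED_hom (ED_exp2 U2) (ED_exp2 W2) :=
  @ED_Hom (ED_exp2 U2) (ED_exp2 W2) f f fM fM (fun _ => erefl).

Definition Z2obj : ED_obj := ED_exp2 Zp2_mulrn2.

Lemma Zp2_pair_mulrn2 (v : 'Z_2 * 'Z_2) : v *+ 2 = 0.
Proof.
by case: v => a b; rewrite mulr2n; apply/eqP;
  rewrite xpair_eqE -!mulr2n !Zp2_mulrn2.
Qed.

Definition V2obj : ED_obj := ED_exp2 Zp2_pair_mulrn2.

Section ProductMaps.
Implicit Types (x y : 'Z_2) (v : 'Z_2 * 'Z_2).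

Lemma inl_zmod_morphism : GRing.zmod_morphism (fun x => (x, 0) : 'Z_2 * 'Z_2).
Proof. by move=> x y; apply/eqP; rewrite xpair_eqE /= ?subr0 ?eqxx. Qed.

Lemma inr_zmod_morphism : GRing.zmod_morphism (fun x => (0, x) : 'Z_2 * 'Z_2).
Proof. by move=> x y; apply/eqP; rewrite xpair_eqE /= ?subr0 ?eqxx. Qed.

Lemma diag_zmod_morphism : GRing.zmod_morphism (fun x => (x, x) : 'Z_2 * 'Z_2).
Proof. by move=> x y; apply/eqP; rewrite xpair_eqE /= !eqxx. Qed.

Lemma fst_zmod_morphism : GRing.zmod_morphism (fun v => v.1 : 'Z_2).
Proof. by []. Qed.

Lemma snd_zmod_morphism : GRing.zmod_morphism (fun v => v.2 : 'Z_2).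
Proof. by []. Qed.

Lemma sum_zmod_morphism : GRing.zmod_morphism (fun v => v.1 + v.2 : 'Z_2).
Proof. by move=> [a b] [c d] /=; rewrite opprD addrACA. Qed.

End ProductMaps.

Definition V2_inl : ED_hom Z2obj V2obj := ED_exp2_hom inl_zmod_morphism.
Definition V2_inr : ED_hom Z2obj V2obj := ED_exp2_hom inr_zmod_morphism.
Definition V2_diag : ED_hom Z2obj V2obj := ED_exp2_hom diag_zmod_morphism.
Definition V2_fst : ED_hom V2obj Z2obj := ED_exp2_hom fst_zmod_morphism.
Definition V2_snd : ED_hom V2obj Z2obj := ED_exp2_hom snd_zmod_morphism.
Definition V2_sum : ED_hom V2obj Z2obj := ED_exp2_hom sum_zmod_morphism.

Section NaturalIso.
Variables (s : functor_ED_EEED)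
  (al : forall X, ED_hom (pi_obj (F_obj s X)) X)
  (be : forall X, ED_hom X (pi_obj (F_obj s X))).
Hypotheses (al_be : forall X, ED_hom_eq (ED_comp (al X) (be X)) (ED_id X))
  (be_al : forall X, ED_hom_eq (ED_comp (be X) (al X)) (ED_id _))
  (al_nat : forall X Y (m : ED_hom X Y),
     ED_hom_eq (ED_comp (al Y) (pi_hom (F_hom s m))) (ED_comp m (al X))).
Local Notation sigmaB m := (EEh_g (F_hom s m)).

Lemma al_f_inj X : injective (EDh_f (al X)).
Proof. by apply: (@can_inj _ _ _ (EDh_f (be X))); case: (be_al X). Qed.

Lemma al_h_inj X : injective (EDh_h (al X)).
Proof. by apply: (@can_inj _ _ _ (EDh_h (be X))); case: (be_al X). Qed.

Lemma al_f_nat X Y (m : ED_hom X Y) a :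
  EDh_f (al Y) (EEh_f (F_hom s m) a) = EDh_f m (EDh_f (al X) a).
Proof. exact: (proj1 (al_nat m)). Qed.

Lemma al_h_nat X Y (m : ED_hom X Y) c :
  EDh_h (al Y) (EEh_h (F_hom s m) c) = EDh_h m (EDh_h (al X) c).
Proof. exact: (proj2 (al_nat m)). Qed.

Lemma F_exact_A2 X (a : ED_A X) :
  a *+ 2 = 0 -> exists b, EDh_f (al X) (EE_psi b) = a.
Proof.
move=> a2; have /EE_exact_A2[b psib] : EDh_f (be X) a *+ 2 = 0.
  by rewrite -(zmod_morphMn (EDh_f_hom _)) a2 (zmod_morph0 (EDh_f_hom _)).
by exists b; rewrite psib; exact: (proj1 (al_be X) a).
Qed.

Lemma F_g_zero_end X (m : ED_hom X X) :
  (forall a, EDh_f m a = 0) -> (forall c, EDh_h m c = 0) ->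
  forall b, sigmaB m b = 0.
Proof.
move=> f0 h0; apply: EEED_idem_hom_g0 => [b|a|c].
- by rewrite -F_g_comp; apply: F_g_ext; split=> x /=; rewrite ?f0 ?h0.
- by apply: (@al_f_inj X); rewrite al_f_nat f0 !(zmod_morph0 (EDh_f_hom _)).
- by apply: (@al_h_inj X); rewrite al_h_nat h0 !(zmod_morph0 (EDh_h_hom _)).
Qed.

Lemma F_g_Z2obj_end (m : ED_hom Z2obj Z2obj) b : sigmaB m b = b *+ EDh_f m 1.
Proof.
have fE := zmod_morph_Zp2 (EDh_f_hom m).
have hE : forall c, EDh_h m c = EDh_f m c := EDh_comm m.
have [m1|m1] : EDh_f m 1 = 0 \/ EDh_f m 1 = 1.
  by move: (EDh_f m 1); apply: Zp2_cases; [left|right].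
- rewrite m1 mulr0n; apply: F_g_zero_end => [a|c]; rewrite ?hE fE m1 mul0rn //.
- rewrite m1 mulr1n -[RHS](@F_g_id s); apply: F_g_ext.
  by split=> x /=; rewrite ?hE fE m1 natr_Zp.
Qed.

Lemma F_g_chi X Y (Y2 : forall c : ED_C Y, c *+ 2 = 0) (q : ED_hom X Y) c :
  sigmaB q (EE_chi c) = 0 -> EDh_h q (EDh_h (al X) c) = 0.
Proof.
rewrite EEh_chi -al_h_nat => /EE_exact_C2[c' ->].
by rewrite (zmod_morphMn (EDh_h_hom _)) Y2.
Qed.

Lemma F_g_kerpsi_eq0 X Y Y' (Y2 : forall c : ED_C Y, c *+ 2 = 0)
    (Y'2 : forall c : ED_C Y', c *+ 2 = 0) (q : ED_hom X Y) (q' : ED_hom X Y') :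
  (forall v, EDh_h q v = 0 -> EDh_h q' v = 0 -> v = 0) ->
  forall y, EE_psi y = 0 -> sigmaB q y = 0 -> sigmaB q' y = 0 -> y = 0.
Proof.
move=> qq' y /EE_exact_B[c <-] /(F_g_chi Y2) qc /(F_g_chi Y'2) q'c.
have -> : c = 0.
  by apply: (@al_h_inj X); rewrite (qq' _ qc q'c) (zmod_morph0 (EDh_h_hom _)).
exact: EE_chi0.
Qed.

Section Lift.
Variables (b0 : EE_B (F_obj s Z2obj))
  (psi_b0 : EDh_f (al Z2obj) (EE_psi b0) = 1).
Local Notation lift i := (sigmaB i b0).

Lemma al_psi_lift X (i : ED_hom Z2obj X) :
  EDh_f (al X) (EE_psi (lift i)) = EDh_f i 1.
Proof. by rewrite -EEh_psi al_f_nat psi_b0. Qed.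

Lemma F_g_lift X (i : ED_hom Z2obj X) (q : ED_hom X Z2obj) :
  sigmaB q (lift i) = b0 *+ EDh_f q (EDh_f i 1).
Proof. by rewrite -F_g_comp F_g_Z2obj_end. Qed.

(* The coefficient identities must hold in nat, as 2 b0 need not vanish. *)
Lemma lift_add X (i j k : ED_hom Z2obj X) (q q' : ED_hom X Z2obj) :
    EDh_f i 1 = EDh_f j 1 + EDh_f k 1 ->
    (forall v, EDh_h q v = 0 -> EDh_h q' v = 0 -> v = 0) ->
    (EDh_f q (EDh_f i 1) =
       EDh_f q (EDh_f j 1) + EDh_f q (EDh_f k 1) :> nat)%N ->
    (EDh_f q' (EDh_f i 1) =
       EDh_f q' (EDh_f j 1) + EDh_f q' (EDh_f k 1) :> nat)%N ->
  lift i = lift j + lift k.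
Proof.
move=> ijk qq' qijk q'ijk; apply/eqP; rewrite -subr_eq0; apply/eqP.
apply: (@F_g_kerpsi_eq0 X Z2obj Z2obj Zp2_mulrn2 Zp2_mulrn2 q q' qq').
- apply: (@al_f_inj X).
  rewrite !(EE_psi_hom, zmod_morphD (@EE_psi_hom _)).
  by rewrite !(EDh_f_hom _, zmod_morphD (EDh_f_hom _)) !al_psi_lift ijk subrr
    (zmod_morph0 (EDh_f_hom _)).
- by rewrite !(EEh_g_hom _, zmod_morphD (EEh_g_hom _)) !F_g_lift qijk
    mulrnDr subrr.
- by rewrite !(EEh_g_hom _, zmod_morphD (EEh_g_hom _)) !F_g_lift q'ijk
    mulrnDr subrr.
Qed.

Lemma lift_mulrn2 X (i : ED_hom Z2obj X) :
  lift i *+ 2 = 0 -> exists c, ED_eta (EDh_f i 1) = c *+ 2.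
Proof.
move=> /EE_eta_psi_mulrn2[c etac]; exists (EDh_h (al X) c).
by rewrite -al_psi_lift -EDh_comm /= etac (zmod_morphMn (EDh_h_hom _)).
Qed.

End Lift.
End NaturalIso.

Theorem proposition3p8 :
  forall s : functor_ED_EEED, nat_iso_pi_sigma_id s -> False.
Proof.
move=> s [al [be [al_be be_al al_nat]]].
have [b0 psi_b0] := @F_exact_A2 s al be al_be Z2obj 1 (Zp2_mulrn2 1).
pose lift X (i : ED_hom Z2obj X) := EEh_g (F_hom s i) b0.
have add_diag : lift _ V2_diag = lift _ V2_inl + lift _ V2_inr.
  apply: (lift_add be_al al_nat psi_b0 (q := V2_fst) (q' := V2_snd)) => //.
  - by apply/eqP.
  - by case=> u v /= -> ->.
have add_inl : lift _ V2_inl = lift _ V2_diag + lift _ V2_inr.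
  apply: (lift_add be_al al_nat psi_b0 (q := V2_fst) (q' := V2_sum)) => //.
  - by apply/eqP.
  - by case=> u v /= ->; rewrite add0r => ->.
have inr2 : lift _ V2_inr *+ 2 = 0.
  apply: (addrI (lift _ V2_inl)).
  by rewrite addr0 mulr2n addrA -add_diag -add_inl.
have [c] := lift_mulrn2 al_nat psi_b0 inr2.
by rewrite Zp2_pair_mulrn2 => /eqP.
Qed.
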